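(* Let $A^{(1)},A^{(2)},A^{(3)},A^{(4)}$ be i.i.d. random variables with values in $\{1,2,3,\dots\}$, and let $X^{(a)},Y^{(b)},Z^{(c)}$ ($a,b,c\ge1$) be i.i.d. random variables with values in $[0,\infty)$, all of these random variables mutually independent. Then $$\max\Big(\sum_{a=1}^{A^{(1)}}X^{(a)},\ \sum_{b=1}^{A^{(2)}}Y^{(b)}\Big)\ \ge_{\mathrm{st}}\ \sum_{a=1}^{\max(A^{(3)},A^{(4)})}Z^{(a)}.$$
   Context: For random variables $X,Y$ with domains $D_X,D_Y\subseteq\mathbb{R}$, $X\ge_{\mathrm{st}}Y$ ($X$ stochastically dominates $Y$) means $\Pr(X>z)\ge\Pr(Y>z)$ for all $z\in D_X\cap D_Y$. *)

From HB Require Import structures.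
From mathcomp Require Import all_boot all_order all_algebra.
From mathcomp Require Import all_classical all_reals all_analysis.
Set Implicit Arguments. Unset Strict Implicit. Unset Printing Implicit Defensive.
Import Order.TTheory GRing.Theory Num.Theory.
Local Open Scope classical_set_scope.
Local Open Scope ring_scope.

Definition mutually_independent d (T : measurableType d) (R : realType)
  (P : probability T R) (I : eqType) (G : I -> set (set T)) : Prop :=
  forall (s : seq I) (E : I -> set T), uniq s ->
    (forall j, j \in s -> G j (E j)) ->
    P [set w | forall j, j \in s -> E j w] = (\prod_(j <- s) P (E j))%E.

Definition sigmaR d (T : measurableType d) (R : realType) (X : T -> R) : set (set T) :=
  [set E | exists B : set R, measurable B /\ E = X @^-1` B].

(* sigma-algebra generated by a nat-valued random variable (discrete sigma-algebra on nat) *)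
Definition sigmaN d (T : measurableType d) (A : T -> nat) : set (set T) :=
  [set E | exists B : set nat, E = A @^-1` B].

(* Stochastic dominance U >=_st V, where DU, DV are the domains of U and V:
   Pr(U > z) >= Pr(V > z) for all z in DU `&` DV. *)
Definition st_dominates d (T : measurableType d) (R : realType) (P : probability T R)
  (U V : T -> R) (DU DV : set R) : Prop :=
  forall z : R, DU z -> DV z ->
    (P [set w | (z < V w)%R] <= P [set w | (z < U w)%R])%E.

(* Conditioning on the values m, k of the counting variables and writing
   a m = P (A = m) and q m = P (X_1 + ... + X_m <= z), independence gives
     P (max (S_X(A1), S_Y(A2)) <= z) = sum_(m, k) a m * a k * q m * q k,
     P (S_Z(max (A3, A4)) <= z)      = sum_(m, k) a m * a k * q (max m k),
   and termwise q m * q k <= q (max m k) because both factors lie in [0, 1]. *)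

From HB Require Import structures.
From mathcomp Require Import all_boot all_order all_algebra.
From mathcomp Require Import all_classical all_reals all_analysis.
Import Order.TTheory GRing.Theory Num.Theory.
Local Open Scope classical_set_scope.
Local Open Scope ring_scope.
Set Implicit Arguments. Unset Strict Implicit. Unset Printing Implicit Defensive.

Lemma setD_homo_subset (S U : Type) (f : set S -> set U) :
  (forall A B, f (A `\` B) = f A `\` f B) -> {homo f : A B / A `<=` B}.
Proof. by move=> fD A B AB; rewrite -(setIidr AB) -setDD fD; exact: subDsetl. Qed.

Section dynkin_extension.
Context d (T : measurableType d) (R : realType) (P : probability T R).
Local Open Scope ereal_scope.

Lemma probabilityD (A B : set T) : measurable A -> measurable B -> B `<=` A ->
  P (A `\` B) = P A - P B.
Proof.
move=> mA mB BA; rewrite measureD ?(setIidr BA) //.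
by rewrite (le_lt_trans (probability_le1 _ mA)) // ltry.
Qed.

Variables (S : Type) (f g : set S -> set T) (c : \bar R).
Hypothesis c_fin : c \is a fin_num.
Hypotheses (fD : forall A B, f (A `\` B) = f A `\` f B)
           (gD : forall A B, g (A `\` B) = g A `\` g B).
Hypotheses (fU : forall F : (set S)^nat, f (\bigcup_n F n) = \bigcup_n f (F n))
           (gU : forall F : (set S)^nat, g (\bigcup_n F n) = \bigcup_n g (F n)).

Definition scaled_agree : set (set S) :=
  [set C | [/\ measurable (f C), measurable (g C) & P (f C) = c * P (g C)]].

(* Since f and g commute with differences and countable unions, the identity
   P (f C) = c * P (g C) passes to proper differences and increasing unions. *)
Lemma scaled_agree_lambda : scaled_agree setT -> lambda_system setT scaled_agree.
Proof.
move=> agreeT; split => //.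
- move=> A B BA [mfA mgA eA] [mfB mgB eB]; rewrite /scaled_agree /= fD gD.
  split; [exact: measurableD|exact: measurableD|].
  rewrite !probabilityD //; [|exact: setD_homo_subset|exact: setD_homo_subset].
  rewrite eA eB muleBr // fin_num_adde_defl // ?fin_num_measure //.
  by rewrite fin_numN fin_num_measure.
- move=> F ndF agreeF; rewrite /scaled_agree /= fU gU.
  have mfF n : measurable (f (F n)) by case: (agreeF n).
  have mgF n : measurable (g (F n)) by case: (agreeF n).
  split; [exact: bigcupT_measurable|exact: bigcupT_measurable|].
  have cvg_f : (P \o (fun n => f (F n))) @ \oo --> P (\bigcup_n f (F n)).
    apply: nondecreasing_cvg_mu => //; first exact: bigcupT_measurable.
    by move=> m n mn; apply/subsetPset/(setD_homo_subset fD)/subsetPset/ndF.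
  have cvg_g : (P \o (fun n => g (F n))) @ \oo --> P (\bigcup_n g (F n)).
    apply: nondecreasing_cvg_mu => //; first exact: bigcupT_measurable.
    by move=> m n mn; apply/subsetPset/(setD_homo_subset gD)/subsetPset/ndF.
  have cvg_cg := cvgeZl c_fin cvg_g.
  have eq_fg : (fun n => c * (P \o (fun n => g (F n))) n) = P \o (fun n => f (F n)).
    by apply/funext => n /=; case: (agreeF n) => _ _ ->.
  rewrite eq_fg in cvg_cg; exact: (cvg_unique _ cvg_f cvg_cg).
Qed.

Lemma scaled_agree_sigma (Gs : set (set S)) : setI_closed Gs ->
  scaled_agree setT -> Gs `<=` scaled_agree -> <<s Gs >> `<=` scaled_agree.
Proof.
move=> GsI agreeT GsA.
apply: (lambda_system_subset GsI (scaled_agree_lambda agreeT) GsA).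
by move=> *; exact: subsetT.
Qed.

End dynkin_extension.

Section cylinders.
Variables (U : Type) (I : eqType) (H : I -> set (set U)).

Definition cylinder (s : seq I) (F : I -> set U) : set U :=
  [set w | forall j, j \in s -> F j w].

Definition cylinders (p : pred I) : set (set U) :=
  [set E | exists s (F : I -> set U), [/\ uniq s, all p s,
     (forall j, j \in s -> H j (F j)) & E = cylinder s F]].

Lemma cylinders_setI (p : pred I) : (forall j, H j setT) ->
  (forall j, setI_closed (H j)) -> setI_closed (cylinders p).
Proof.
move=> HT HI E1 E2 [s1 [F1 [u1 a1 h1 ->]]] [s2 [F2 [u2 a2 h2 ->]]].
pose base (s : seq I) (F : I -> set U) (j : I) := if j \in s then F j else setT.
exists (undup (s1 ++ s2)), (fun j => base s1 F1 j `&` base s2 F2 j); split.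
- exact: undup_uniq.
- by apply/allP => j; rewrite mem_undup mem_cat => /orP[] js;
    [move/allP: a1|move/allP: a2]; apply.
- by move=> j _; apply: HI; rewrite /base; case: ifP => js //; [apply: h1|apply: h2].
- apply/seteqP; split => w /=.
    move=> [Hw1 Hw2] j _; rewrite /base.
    by split; case: ifP => js //; [apply: Hw1|apply: Hw2].
  by move=> Hw; split=> j js; have := Hw j;
    rewrite mem_undup mem_cat js ?orbT /base js => /(_ isT) [].
Qed.

Lemma sigma_cylinders_gen (p : pred I) j E : p j -> H j E -> <<s cylinders p >> E.
Proof.
move=> pj hE; apply: sub_sigma_algebra; exists [:: j], (fun _ => E); split => //=.
- by rewrite pj.
- by move=> k; rewrite inE => /eqP ->.
- apply/seteqP; split => w /=; first by move=> Ew k.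
  by move=> /(_ j); rewrite inE eqxx; apply.
Qed.

Lemma sigma_cylinders_mono (p q : pred I) : subpred p q ->
  <<s cylinders p >> `<=` <<s cylinders q >>.
Proof.
move=> pq; apply: sub_sigma_algebra2 => F [s [G' [u a h ->]]].
exists s, G'; split => //; apply/allP => j js; apply: pq; move/allP: a; exact.
Qed.

End cylinders.

Lemma sigma_setI (U : Type) (G : set (set U)) (A B : set U) :
  <<s G >> A -> <<s G >> B -> <<s G >> (A `&` B).
Proof.
have [_ _ _ +] := (sigma_algebraP (fun _ _ => @subsetT _ _)).1
  (smallest_sigma_algebra setT G); exact.
Qed.

Lemma setI_setD (U : Type) (F A B : set U) : F `&` (A `\` B) = (F `&` A) `\` (F `&` B).
Proof.
apply/seteqP; split => w /=; first by move=> [Fw [Aw nBw]]; split => // -[].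
by move=> [[Fw Aw] nFBw]; split => //; split => // Bw; exact: nFBw.
Qed.

Section grouped_independence.
Context d (T : measurableType d) (R : realType) (P : probability T R).
Variables (I : eqType) (G : I -> set (set T)).
Hypothesis GT : forall j, G j setT.
Hypothesis GI : forall j, setI_closed (G j).
Hypothesis Gm : forall j E, G j E -> measurable E.
Hypothesis G_indep : mutually_independent P G.
Local Open Scope ereal_scope.

Lemma cylinder_measurable (s : seq I) (F : I -> set T) :
  (forall j, j \in s -> measurable (F j)) -> measurable (cylinder s F).
Proof.
elim: s => [|a s IH] mF.
  by rewrite (_ : cylinder _ _ = setT) //; apply/seteqP; split.
rewrite (_ : cylinder _ _ = F a `&` cylinder s F).
  apply: measurableI; first by apply: mF; rewrite inE eqxx.
  by apply: IH => j js; apply: mF; rewrite inE js orbT.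
apply/seteqP; split => w /=.
  by move=> Fw; split => [|j js]; apply: Fw; rewrite inE ?eqxx ?js ?orbT.
by move=> [Faw Fsw] j; rewrite inE => /orP[/eqP ->|/Fsw].
Qed.

Lemma sigma_cylinders_measurable p : <<s cylinders G p >> `<=` measurable.
Proof.
apply: smallest_sub; first exact: sigma_algebra_measurable.
by move=> _ [s [F [_ _ hF ->]]]; apply: cylinder_measurable => j /hF /Gm.
Qed.

Lemma cylinders_indep (p1 p2 : pred I) E F : (forall j, p1 j -> p2 j -> False) ->
  cylinders G p1 E -> cylinders G p2 F -> P (E `&` F) = P E * P F.
Proof.
move=> dj [s1 [F1 [u1 a1 h1 ->]]] [s2 [F2 [u2 a2 h2 ->]]].
have djs j : j \in s1 -> j \in s2 -> False.
  by move=> j1 j2; apply: (dj j); [move/allP: a1; apply|move/allP: a2; apply].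
pose F12 j := if j \in s1 then F1 j else F2 j.
have F12_1 j : j \in s1 -> F12 j = F1 j by rewrite /F12 => ->.
have F12_2 j : j \in s2 -> F12 j = F2 j.
  by rewrite /F12; case: ifP => // j1 j2; case: (djs j).
have u12 : uniq (s1 ++ s2).
  rewrite cat_uniq u1 u2 /= andbT; apply/hasPn => j j2; apply/negP => j1.
  exact: (djs j).
have hF12 j : j \in s1 ++ s2 -> G j (F12 j).
  by rewrite mem_cat => /orP[j1|j2];
    [rewrite F12_1 //; exact: h1|rewrite F12_2 //; exact: h2].
have -> : cylinder s1 F1 `&` cylinder s2 F2 = cylinder (s1 ++ s2) F12.
  apply/seteqP; split => w /=.
    by move=> [w1 w2] j; rewrite mem_cat => /orP[j1|j2];
      [rewrite F12_1 //; exact: w1|rewrite F12_2 //; exact: w2].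
  by move=> w12; split => j js; [rewrite -F12_1 //|rewrite -F12_2 //];
    apply: w12; rewrite mem_cat js ?orbT.
rewrite (G_indep u12 hF12) (G_indep u1 h1) (G_indep u2 h2) big_cat /=.
by congr (_ * _); rewrite !big_seq; apply: eq_bigr => j js;
  [rewrite F12_1|rewrite F12_2].
Qed.

(* The first event may range over the generated sigma-algebra: Dynkin's theorem
   with f C := F `&` C, g := id and scale P F. *)
Lemma sigma_cylinder_indep (p1 p2 : pred I) E F :
  (forall j, p1 j -> p2 j -> False) ->
  <<s cylinders G p1 >> E -> cylinders G p2 F -> P (E `&` F) = P E * P F.
Proof.
move=> dj hE hF; have mF := sigma_cylinders_measurable (sub_sigma_algebra hF).
have agreeT : scaled_agree P (setI F) id (P F) setT.
  by split; rewrite /= ?setIT ?probability_setT ?mule1.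
have agree_cyl : cylinders G p1 `<=` scaled_agree P (setI F) id (P F).
  move=> C hC; have mC := sigma_cylinders_measurable (sub_sigma_algebra hC).
  split => //=; first exact: measurableI.
  by rewrite setIC (cylinders_indep dj hC hF) muleC.
have [_ _] := scaled_agree_sigma (fin_num_measure _ _ mF) (setI_setD F)
  (fun _ _ => erefl) (fun Fs => setI_bigcupr _ _ _) (fun _ => erefl)
  (@cylinders_setI _ _ G _ GT GI) agreeT agree_cyl hE.
by rewrite setIC muleC.
Qed.

(* Events generated by disjoint groups of indices are independent; this is
   Dynkin's theorem again, now with f C := E `&` C. *)
Lemma sigma_indep (p1 p2 : pred I) E F :
  (forall j, p1 j -> p2 j -> False) ->
  <<s cylinders G p1 >> E -> <<s cylinders G p2 >> F -> P (E `&` F) = P E * P F.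
Proof.
move=> dj hE hF; have mE := sigma_cylinders_measurable hE.
have agreeT : scaled_agree P (setI E) id (P E) setT.
  by split; rewrite /= ?setIT ?probability_setT ?mule1.
have agree_cyl : cylinders G p2 `<=` scaled_agree P (setI E) id (P E).
  move=> C hC; have mC := sigma_cylinders_measurable (sub_sigma_algebra hC).
  split => //=; first exact: measurableI.
  exact: sigma_cylinder_indep dj hE hC.
by have [] := scaled_agree_sigma (fin_num_measure _ _ mE) (setI_setD E)
  (fun _ _ => erefl) (fun Fs => setI_bigcupr _ _ _) (fun _ => erefl)
  (@cylinders_setI _ _ G _ GT GI) agreeT agree_cyl hF.
Qed.

End grouped_independence.

Lemma partial_sum_le_sigma (R : realType) (U : pointedType) (Gs : set (set U))
    (h : nat -> U -> R) m z :
  (forall a B, measurable B -> <<s Gs >> (h a @^-1` B)) ->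
  <<s Gs >> [set u | \sum_(0 <= a < m) h a u <= z].
Proof.
move=> hG.
have mh a : measurable_fun (setT : set (g_sigma_algebraType Gs))
    (h a : g_sigma_algebraType Gs -> R).
  by move=> _ B mB; rewrite setTI; exact: hG.
have msum := @measurable_sum _ (g_sigma_algebraType Gs) R setT nat (index_iota 0 m) h mh.
by have := msum measurableT _ (measurable_itv `]-oo, z]); rewrite setTI.
Qed.

(* Real sequences, as the sample space of a sequence of random variables. *)
Definition realseq (R : realType) : Type := nat -> R.
HB.instance Definition _ (R : realType) := Choice.on (realseq R).
HB.instance Definition _ (R : realType) := isPointed.Build (realseq R) (fun _ => 0).

Section partial_sum_law.
Context (R : realType).

Definition coord_events (j : nat) : set (set (realseq R)) :=
  [set E | exists B : set R, measurable B /\ E = (fun f : realseq R => f j) @^-1` B].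

Lemma coord_eventsT j : coord_events j setT.
Proof. by exists setT; split. Qed.

Lemma coord_eventsI j : setI_closed (coord_events j).
Proof.
move=> _ _ [B [mB ->]] [B' [mB' ->]]; exists (B `&` B'); split => //.
exact: measurableI.
Qed.

Definition coord_section (E : set (realseq R)) (j : nat) : set R :=
  [set x | E (fun a => if a == j then x else 0)].

Lemma coord_events_section j E : coord_events j E ->
  measurable (coord_section E j) /\ forall f, E f = coord_section E j (f j).
Proof. by move=> [B [mB ->]]; rewrite /coord_section /= eqxx. Qed.

Context d (T : measurableType d) (P : probability T R).
Local Open Scope ereal_scope.

Definition indep_seq (V : nat -> T -> R) : Prop :=
  forall (s : seq nat) (B : nat -> set R), uniq s ->
    (forall j, j \in s -> measurable (B j)) ->
    P [set w | forall j, j \in s -> B j (V j w)] = \prod_(j <- s) P (V j @^-1` B j).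

Variables (V V' : nat -> T -> R).
Hypotheses (mV : forall a, measurable_fun setT (V a))
           (mV' : forall a, measurable_fun setT (V' a)).
Hypotheses (iV : indep_seq V) (iV' : indep_seq V').
Hypothesis same_marginals : forall a B, measurable B ->
  P (V a @^-1` B) = P (V' a @^-1` B).

Lemma indep_seq_law C : <<s cylinders coord_events predT >> C ->
  P [set w | C (fun a => V a w)] = P [set w | C (fun a => V' a w)].
Proof.
pose sample (W : nat -> T -> R) (w : T) : realseq R := fun a => W a w.
have mVB a B : measurable B -> measurable (V a @^-1` B).
  by move=> mB; rewrite -[_ @^-1` _]setTI; exact: mV.
have mV'B a B : measurable B -> measurable (V' a @^-1` B).
  by move=> mB; rewrite -[_ @^-1` _]setTI; exact: mV'.
have agreeT : scaled_agree P (preimage (sample V)) (preimage (sample V')) 1 setT.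
  by split; [exact: measurableT|exact: measurableT|rewrite mul1e].
have agree_cyl : cylinders coord_events predT `<=`
    scaled_agree P (preimage (sample V)) (preimage (sample V')) 1.
  move=> _ [s [F [u _ hF ->]]].
  pose B j := coord_section (F j) j.
  have mB j : j \in s -> measurable (B j) by move=> /hF /coord_events_section [].
  have eF j : j \in s -> forall g, F j g = B j (g j).
    by move=> /hF /coord_events_section [_].
  have cylB W : sample W @^-1` cylinder s F = [set w | forall j, j \in s -> B j (W j w)].
    apply/seteqP; split => w /= h j js; first by have := h j js; rewrite eF.
    by rewrite eF //; exact: h.
  rewrite /scaled_agree /= (cylB V) (cylB V') mul1e iV // iV' //; split.
  - by apply: cylinder_measurable => j js; apply: mVB; apply: mB.
  - by apply: cylinder_measurable => j js; apply: mV'B; apply: mB.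
  - by rewrite !big_seq; apply: eq_bigr => j js; apply: same_marginals; apply: mB.
move=> hC; have [_ _] := @scaled_agree_sigma _ _ _ P _ (preimage (sample V))
  (preimage (sample V')) 1 isT (fun _ _ => erefl) (fun _ _ => erefl)
  (fun _ => erefl) (fun _ => erefl) _
  (@cylinders_setI _ _ coord_events predT coord_eventsT coord_eventsI)
  agreeT agree_cyl C hC.
by rewrite mul1e.
Qed.

Lemma indep_seq_partial_sum_law m z :
  P [set w | (\sum_(0 <= a < m) V a w <= z)%R] =
  P [set w | (\sum_(0 <= a < m) V' a w <= z)%R].
Proof.
have sum_event : <<s cylinders coord_events predT >>
    [set g : realseq R | (\sum_(0 <= a < m) g a <= z)%R].
  apply: partial_sum_le_sigma => a B mB.
  by apply: (@sigma_cylinders_gen _ _ coord_events predT a) => //; exists B.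
exact: (indep_seq_law sum_event).
Qed.

End partial_sum_law.

Section total_probability.
Context d (T : measurableType d) (R : realType) (mu : {measure set T -> \bar R}).
Local Open Scope ereal_scope.

Lemma total_probability (S : set T) (N : T -> nat) : measurable S ->
  (forall n, measurable (N @^-1` [set n])) ->
  mu S = \sum_(n <oo) mu (N @^-1` [set n] `&` S).
Proof.
move=> mS mN.
have {1}-> : S = \bigcup_n (N @^-1` [set n] `&` S).
  by apply/seteqP; split => [w Sw|w [n _ [_ Sw]] //]; exists (N w).
rewrite measure_bigcup //=; last first.
- by move=> m n _ _ [w [[/= <- _] [/= -> _]]].
- by move=> n _; apply: measurableI.
by apply: eq_eseriesl => n; rewrite in_setT.
Qed.

Lemma measurable_by_values (S : set T) (N M : T -> nat) :
  (forall m k, measurable (N @^-1` [set m] `&` (M @^-1` [set k] `&` S))) ->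
  measurable S.
Proof.
move=> mslice.
have -> : S = \bigcup_m \bigcup_k (N @^-1` [set m] `&` (M @^-1` [set k] `&` S)).
  apply/seteqP; split => [w Sw|w [m _ [k _ [_ [_ Sw]]]] //].
  by exists (N w) => //; exists (M w).
by apply: bigcupT_measurable => m; apply: bigcupT_measurable => k.
Qed.

Lemma total_probability2 (S : set T) (N M : T -> nat) : measurable S ->
  (forall n, measurable (N @^-1` [set n])) -> (forall n, measurable (M @^-1` [set n])) ->
  mu S = \sum_(m <oo) \sum_(k <oo) mu (N @^-1` [set m] `&` (M @^-1` [set k] `&` S)).
Proof.
move=> mS mN mM; rewrite (total_probability mS mN).
apply: eq_eseriesr => m _; rewrite (total_probability (measurableI _ _ (mN m) mS) mM).
by apply: eq_eseriesr => k _; rewrite setICA.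
Qed.

End total_probability.

Lemma mul_le_at_maxn (R : realType) (q : nat -> \bar R) :
  (forall n, 0 <= q n)%E -> (forall n, q n <= 1)%E ->
  forall m k, (q m * q k <= q (maxn m k))%E.
Proof.
move=> q0 q1 m k; have [_|_] := leqP m k.
- by rewrite -[leRHS]mul1e lee_wpmul2r.
- by rewrite -[leRHS]mule1 lee_wpmul2l.
Qed.

Lemma lt_setC (T : Type) (R : realType) (f : T -> R) (z : R) :
  [set w | z < f w] = ~` [set w | f w <= z].
Proof. by apply/seteqP; split => w /=; rewrite ltNge => /negP. Qed.

Section compound_sums.
Context d (T : measurableType d) (R : realType) (P : probability T R).
Variables (A1 A2 A3 A4 : T -> nat) (X Y Z : nat -> T -> R).

(* The counting variables and the summand sequences, indexed as in the
   independence hypothesis; out-of-range indices fall back to A1 and X. *)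
Definition count_var (k : nat) : T -> nat := nth A1 [:: A1; A2; A3; A4] k.
Definition summands (k : nat) : nat -> T -> R := nth X [:: X; Y; Z] k.

Local Notation rv_index := ('I_4 + 'I_3 * nat)%type.

Definition rv_sigma (i : rv_index) : set (set T) :=
  match i with
  | inl k => sigmaN (count_var k)
  | inr (k, a) => sigmaR (summands k a)
  end.

(* The hypotheses of the theorem. *)
Hypotheses (mA1 : forall n, measurable (A1 @^-1` [set n]))
           (mA2 : forall n, measurable (A2 @^-1` [set n]))
           (mA3 : forall n, measurable (A3 @^-1` [set n]))
           (mA4 : forall n, measurable (A4 @^-1` [set n])).
Hypotheses (dA2 : forall B : set nat, P (A2 @^-1` B) = P (A1 @^-1` B))
           (dA3 : forall B : set nat, P (A3 @^-1` B) = P (A1 @^-1` B))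
           (dA4 : forall B : set nat, P (A4 @^-1` B) = P (A1 @^-1` B)).
Hypotheses (mX : forall a, measurable_fun setT (X a))
           (mY : forall a, measurable_fun setT (Y a))
           (mZ : forall a, measurable_fun setT (Z a)).
Hypotheses
  (dX : forall a (B : set R), measurable B -> P (X a @^-1` B) = P (X 0%N @^-1` B))
  (dY : forall a (B : set R), measurable B -> P (Y a @^-1` B) = P (X 0%N @^-1` B))
  (dZ : forall a (B : set R), measurable B -> P (Z a @^-1` B) = P (X 0%N @^-1` B)).
Hypothesis rv_indep : mutually_independent P rv_sigma.

Lemma count_var_measurable k n : measurable (count_var k @^-1` [set n]).
Proof.
case: k => [|[|[|[|k]]]]; rewrite /count_var /= ?nth_nil;
  [exact: mA1|exact: mA2|exact: mA3|exact: mA4|exact: mA1].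
Qed.

Lemma count_var_law k B : P (count_var k @^-1` B) = P (A1 @^-1` B).
Proof. by case: k => [|[|[|[|k]]]]; rewrite /count_var /= ?nth_nil ?dA2 ?dA3 ?dA4. Qed.

Lemma summands_measurable k a : measurable_fun setT (summands k a).
Proof. by case: k => [|[|[|k]]]; rewrite /summands /= ?nth_nil. Qed.

Lemma summands_law k a B : measurable B ->
  P (summands k a @^-1` B) = P (X 0%N @^-1` B).
Proof. by case: k => [|[|[|k]]] mB; rewrite /summands /= ?nth_nil ?dX ?dY ?dZ. Qed.

Lemma rv_sigmaT i : rv_sigma i setT.
Proof. by case: i => [k|[k a]]; exists setT. Qed.

Lemma rv_sigmaI i : setI_closed (rv_sigma i).
Proof.
case: i => [k|[k a]]; first by move=> _ _ [B ->] [B' ->]; exists (B `&` B').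
move=> _ _ [B [mB ->]] [B' [mB' ->]]; exists (B `&` B'); split => //.
exact: measurableI.
Qed.

Lemma rv_sigma_measurable i E : rv_sigma i E -> measurable E.
Proof.
case: i => [k [B ->]|[k a] [B [mB ->]]].
  rewrite (_ : _ @^-1` _ = \bigcup_(n in B) (count_var k @^-1` [set n])).
    by apply: bigcup_measurable => n _; exact: count_var_measurable.
  apply/seteqP; split => [w Bw|w [n Bn /= nw]]; first by exists (count_var k w).
  by rewrite /preimage /= nw.
by rewrite -[_ @^-1` _]setTI; exact: summands_measurable.
Qed.

Definition group (ks js : seq nat) : pred rv_index :=
  fun i => match i with inl k => val k \in ks | inr (k, _) => val k \in js end.

Local Open Scope ereal_scope.

Local Notation group_event ks js := (<<s cylinders rv_sigma (group ks js) >>).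

Lemma group_indep ks js ks' js' E F :
  group_event ks js E -> group_event ks' js' F ->
  all (fun n => n \notin ks') ks -> all (fun n => n \notin js') js ->
  P (E `&` F) = P E * P F.
Proof.
move=> hE hF /allP dks /allP djs; apply: (sigma_indep _ _ _ _ _ hE hF).
- exact: rv_sigmaT.
- exact: rv_sigmaI.
- exact: rv_sigma_measurable.
- exact: rv_indep.
- by case=> [k|[k a]] /= h h'; [have := dks _ h|have := djs _ h]; rewrite h'.
Qed.

Lemma group_eventI ks js ks1 js1 ks2 js2 E F :
  group_event ks1 js1 E -> group_event ks2 js2 F ->
  all (mem ks) ks1 -> all (mem js) js1 -> all (mem ks) ks2 -> all (mem js) js2 ->
  group_event ks js (E `&` F).
Proof.
move=> hE hF /allP k1 /allP j1 /allP k2 /allP j2.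
apply: sigma_setI.
- by apply: (sigma_cylinders_mono _ hE) => -[k|[k a]] /=; [exact: k1|exact: j1].
- by apply: (sigma_cylinders_mono _ hF) => -[k|[k a]] /=; [exact: k2|exact: j2].
Qed.

Lemma count_event k m : (k < 4)%N ->
  group_event [:: k] [::] (count_var k @^-1` [set m]).
Proof.
move=> k4; apply: (@sigma_cylinders_gen _ _ rv_sigma _ (inl (Ordinal k4))).
- by rewrite /= inE.
- by exists [set m].
Qed.

Variable z : R.

Definition sum_le (V : nat -> T -> R) (m : nat) : set T :=
  [set w | (\sum_(0 <= a < m) V a w <= z)%R].

Lemma summands_event k m : (k < 3)%N ->
  group_event [::] [:: k] (sum_le (summands k) m).
Proof.
move=> k3; apply: partial_sum_le_sigma => a B mB.
apply: (@sigma_cylinders_gen _ _ rv_sigma _ (inr (Ordinal k3, a))).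
- by rewrite /= inE.
- by exists B.
Qed.

Lemma summands_indep k : (k < 3)%N -> indep_seq P (summands k).
Proof.
move=> k3 s B us mB.
pose idx (j : nat) : rv_index := inr (Ordinal k3, j).
pose E (i : rv_index) := if i is inr (_, j) then summands k j @^-1` B j else setT.
have u : uniq (map idx s) by rewrite map_inj_uniq // => x y [].
have hE i : i \in map idx s -> rv_sigma i (E i).
  by move=> /mapP [j js ->]; exists (B j); split => //; apply: mB.
have := rv_indep u hE; rewrite big_map => <-.
congr (P _); apply/seteqP; split => w /= h.
- by move=> i /mapP [j js ->]; apply: h.
- by move=> j js; apply: (h (idx j)); apply: map_f.
Qed.

Lemma sum_le_law k m : (k < 3)%N -> P (sum_le (summands k) m) = P (sum_le X m).
Proof.
move=> k3; apply: (@indep_seq_partial_sum_law _ _ _ P (summands k) (summands 0)).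
- exact: summands_measurable.
- exact: summands_measurable.
- exact: summands_indep.
- exact: summands_indep.
- by move=> a B mB; rewrite !summands_law.
Qed.

Lemma sum_le_measurable k m : (k < 3)%N -> measurable (sum_le (summands k) m).
Proof.
move=> k3; apply: (sigma_cylinders_measurable rv_sigma_measurable).
exact: summands_event.
Qed.

Definition count_pmf (m : nat) : \bar R := P (A1 @^-1` [set m]).
Definition sum_cdf (m : nat) : \bar R := P (sum_le X m).

Lemma sum_cdf_le1 m : sum_cdf m <= 1.
Proof. exact/probability_le1/(sum_le_measurable (k := 0)). Qed.

(* Joint law of (A1, A2) together with the events {S_X(m) <= z}, {S_Y(k) <= z}:
   the four events come from disjoint groups, hence factorize. *)
Lemma joint_max_event m k :
  P (A1 @^-1` [set m] `&` (A2 @^-1` [set k] `&` (sum_le X m `&` sum_le Y k))) =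
  count_pmf m * (count_pmf k * (sum_cdf m * sum_cdf k)).
Proof.
have ev_A1 := count_event (k := 0) m isT; have ev_A2 := count_event (k := 1) k isT.
have ev_X := summands_event (k := 0) m isT; have ev_Y := summands_event (k := 1) k isT.
have ev_XY := group_eventI (ks := [::]) (js := [:: 0%N; 1%N]) ev_X ev_Y isT isT isT isT.
rewrite (group_indep ev_A1
  (group_eventI (ks := [:: 1%N]) (js := [:: 0%N; 1%N]) ev_A2 ev_XY isT isT isT isT)
  isT isT).
rewrite (group_indep ev_A2 ev_XY isT isT) (group_indep ev_X ev_Y isT isT).
by rewrite (count_var_law 1) (sum_le_law (k := 1)).
Qed.

Lemma joint_sum_event m k :
  P (A3 @^-1` [set m] `&` (A4 @^-1` [set k] `&` sum_le Z (maxn m k))) =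
  count_pmf m * (count_pmf k * sum_cdf (maxn m k)).
Proof.
have ev_A3 := count_event (k := 2) m isT; have ev_A4 := count_event (k := 3) k isT.
have ev_Z := summands_event (k := 2) (maxn m k) isT.
rewrite (group_indep ev_A3
  (group_eventI (ks := [:: 3%N]) (js := [:: 2%N]) ev_A4 ev_Z isT isT isT isT) isT isT).
rewrite (group_indep ev_A4 ev_Z isT isT).
by rewrite (count_var_law 2) (count_var_law 3) (sum_le_law (k := 2)).
Qed.

Definition max_of_compounds (w : T) : R :=
  Num.max (\sum_(0 <= a < A1 w) X a w)%R (\sum_(0 <= b < A2 w) Y b w)%R.
Definition compound_of_max (w : T) : R :=
  (\sum_(0 <= c < maxn (A3 w) (A4 w)) Z c w)%R.

Lemma max_of_compounds_slice m k :
  A1 @^-1` [set m] `&` (A2 @^-1` [set k] `&` [set w | (max_of_compounds w <= z)%R]) =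
  A1 @^-1` [set m] `&` (A2 @^-1` [set k] `&` (sum_le X m `&` sum_le Y k)).
Proof.
apply/seteqP; split => w /= [Am [Ak]]; rewrite /max_of_compounds Am Ak.
- by rewrite ge_max => /andP.
- by move=> [hXm hYk]; rewrite ge_max hXm hYk.
Qed.

Lemma compound_of_max_slice m k :
  A3 @^-1` [set m] `&` (A4 @^-1` [set k] `&` [set w | (compound_of_max w <= z)%R]) =
  A3 @^-1` [set m] `&` (A4 @^-1` [set k] `&` sum_le Z (maxn m k)).
Proof. by apply/seteqP; split => w /= [Am [Ak]]; rewrite /compound_of_max Am Ak. Qed.

Lemma max_of_compounds_tail :
  P [set w | (z < max_of_compounds w)%R] =
  1 - \sum_(m <oo) \sum_(k <oo) count_pmf m * (count_pmf k * (sum_cdf m * sum_cdf k)).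
Proof.
have mS : measurable [set w | (max_of_compounds w <= z)%R].
  apply: (measurable_by_values (N := A1) (M := A2)) => m k.
  rewrite max_of_compounds_slice; apply: measurableI => //; apply: measurableI => //.
  by apply: measurableI;
    [exact: (sum_le_measurable (k := 0))|exact: (sum_le_measurable (k := 1))].
rewrite lt_setC probability_setC // (total_probability2 P mS mA1 mA2).
congr (_ - _); apply: eq_eseriesr => m _; apply: eq_eseriesr => k _.
by rewrite max_of_compounds_slice; exact: joint_max_event.
Qed.

Lemma compound_of_max_tail :
  P [set w | (z < compound_of_max w)%R] =
  1 - \sum_(m <oo) \sum_(k <oo) count_pmf m * (count_pmf k * sum_cdf (maxn m k)).
Proof.
have mS : measurable [set w | (compound_of_max w <= z)%R].
  apply: (measurable_by_values (N := A3) (M := A4)) => m k.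
  rewrite compound_of_max_slice; apply: measurableI => //; apply: measurableI => //.
  exact: (sum_le_measurable (k := 2)).
rewrite lt_setC probability_setC // (total_probability2 P mS mA3 mA4).
congr (_ - _); apply: eq_eseriesr => m _; apply: eq_eseriesr => k _.
by rewrite compound_of_max_slice; exact: joint_sum_event.
Qed.

End compound_sums.

Theorem corollary1 (d : measure_display) (T : measurableType d) (R : realType)
  (P : probability T R)
  (A1 A2 A3 A4 : T -> nat) (X Y Z : nat -> T -> R)
  (* A^(i) take values in {1,2,3,...} and are random variables *)
  (hA1 : forall w, (0 < A1 w)%N) (hA2 : forall w, (0 < A2 w)%N)
  (hA3 : forall w, (0 < A3 w)%N) (hA4 : forall w, (0 < A4 w)%N)
  (mA1 : forall n, measurable (A1 @^-1` [set n]))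
  (mA2 : forall n, measurable (A2 @^-1` [set n]))
  (mA3 : forall n, measurable (A3 @^-1` [set n]))
  (mA4 : forall n, measurable (A4 @^-1` [set n]))
  (* A^(i) identically distributed *)
  (dA2 : forall B : set nat, P (A2 @^-1` B) = P (A1 @^-1` B))
  (dA3 : forall B : set nat, P (A3 @^-1` B) = P (A1 @^-1` B))
  (dA4 : forall B : set nat, P (A4 @^-1` B) = P (A1 @^-1` B))
  (* X^(a), Y^(b), Z^(c) are [0,oo)-valued random variables *)
  (mX : forall a, measurable_fun setT (X a))
  (mY : forall a, measurable_fun setT (Y a))
  (mZ : forall a, measurable_fun setT (Z a))
  (hX : forall a w, 0 <= X a w) (hY : forall a w, 0 <= Y a w)
  (hZ : forall a w, 0 <= Z a w)
  (* all X^(a), Y^(b), Z^(c) identically distributed *)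
  (dX : forall a (B : set R), measurable B -> P (X a @^-1` B) = P (X 0%N @^-1` B))
  (dY : forall a (B : set R), measurable B -> P (Y a @^-1` B) = P (X 0%N @^-1` B))
  (dZ : forall a (B : set R), measurable B -> P (Z a @^-1` B) = P (X 0%N @^-1` B))
  (* all these random variables are mutually independent *)
  (hind : mutually_independent P
     (fun i : ('I_4 + ('I_3 * nat))%type =>
        match i with
        | inl k => sigmaN (nth A1 [:: A1; A2; A3; A4] k)
        | inr (k, a) => sigmaR (nth X [:: X; Y; Z] k a)
        end)) :
  st_dominates P
    (fun w => Num.max (\sum_(0 <= a < A1 w) X a w) (\sum_(0 <= b < A2 w) Y b w))
    (fun w => \sum_(0 <= c < maxn (A3 w) (A4 w)) Z c w)
    [set z | 0 <= z] [set z | 0 <= z].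
Proof.
move=> z _ _.
rewrite (max_of_compounds_tail mA1 mA2 mA3 mA4 dA2 dA3 dA4 mX mY mZ dX dY dZ hind z).
rewrite (compound_of_max_tail mA1 mA2 mA3 mA4 dA2 dA3 dA4 mX mY mZ dX dY dZ hind z).
have cdf_le1 := sum_cdf_le1 P mA1 mA2 mA3 mA4 mX mY mZ z.
apply: leeB => //; apply: lee_nneseries => [m _ _|m _].
  by apply: nneseries_ge0 => k _ _; rewrite !mule_ge0.
apply: lee_nneseries => [k _ _|k _]; first by rewrite !mule_ge0.
by rewrite !lee_wpmul2l //; apply: mul_le_at_maxn.
Qed.
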